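(* There is an absolute constant $c$ such that, for every instance, every arrival order, every admissible choice of the forests $\hat F^{(t)}_{{\rm inh},i}\subseteq\hat F^{(t)}_i$, and every level $i\ge0$, \[ \sum_{t=1}^{n}\bigl|\hat F^{(t)}_{i}\setminus\hat F^{(t)}_{{\rm inh},i}\bigr|\cdot 2^{i+1}\le c\cdot\mathsf{OPT}, \] where $\mathsf{OPT}$ is the cost of an optimal Steiner forest solution to the final instance $(\mathcal{M}^{(n)},D^{(n)})$.
   Context: An offline instance $(\mathcal{M},D)$ consists of demand pairs $D=\{(u_j,v_j)\}$ over a terminal set $V=\{u_j,v_j\}$, each terminal in exactly one pair (the other element of its pair is its mate), and a metric $\mathcal{M}$ on $V$ with all distances at least $1$, viewed as the complete graph on $V$ with edge costs equal to distances; a feasible solution is an edge set in which every pair is connected, and its cost is the sum of its edge costs. A clustering of $V$ is a partition of $V$; $\mathcal{M}/\mathscr{C}$ denotes the shortest-path metric on $\mathscr{C}$ of the graph obtained from the complete weighted graph on $V$ by contracting each cluster of $\mathscr{C}$ into a single vertex. For clusterings $\mathscr{C}_1$ of $V_1$ and $\mathscr{C}_2$ of $V_2$, write $\mathscr{C}_1\preceq\mathscr{C}_2$ if every cluster of $\mathscr{C}_1$ is contained in some cluster of $\mathscr{C}_2$. Clustering procedure: ${\sf level}(v)=\lceil\log_2{\sf dist}_{\mathcal{M}}(v,\text{mate of }v)\rceil$, ${\sf level}(C)=\max_{v\in C}{\sf level}(v)$, $L=\max_v{\sf level}(v)$. $\mathscr{C}_0$ is the singleton clustering. For $i=0,\dots,L$: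 $C\in\mathscr{C}_i$ is $i$-active if ${\sf level}(C)\ge i$; $H_i$ has as vertices the $i$-active clusters of $\mathscr{C}_i$, with an edge between distinct $C_1,C_2$ iff ${\sf dist}_{\mathcal{M}/\mathscr{C}_i}(C_1,C_2)<2^{i+1}$; $\mathscr{C}_{i+1}$ consists of the non-$i$-active clusters of $\mathscr{C}_i$ together with, for each connected component of $H_i$, the union of its clusters. Online setting: $n$ pairs arrive in order; for $1\le t\le n$ the instance $(\mathcal{M}^{(t)},D^{(t)})$ consists of the first $t$ pairs and the metric restricted to their terminals. Running the procedure yields $L^{(t)},\mathscr{C}^{(t)}_i,H^{(t)}_i$; for $i\ge L^{(t)}+1$, $\mathscr{C}^{(t)}_i:=\mathscr{C}^{(t)}_{L^{(t)}+1}$ and $H^{(t)}_i$ is empty; for $t=0$ all $\mathscr{C}^{(0)}_i,H^{(0)}_i$ are empty. It holds that $\mathscr{C}^{(t-1)}_i\preceq\mathscr{C}^{(t)}_i$. Virtual forests are chosen recursively in $t$: $\hat F^{(0)}_i=\emptyset$. Given the spanning forest $\hat F^{(t-1)}_i$ of $H^{(t-1)}_i$, for each edge $(C_1,C_2)\in\hat F^{(t-1)}_i$ let $D_1,D_2$ be the clusters of $\mathscr{C}^{(t)}_i$ containing $C_1,C_2$; if $D_1\ne D_2$ then $(D_1,D_2)$ is an edge of $H^{(t)}_i$, called inherited. Let $\hat F^{(t)}_{{\rm inh},i}$ be an arbitrary spanning forest of the subgraph of $H^{(t)}_i$ formed by its inherited edges, and let $\hat F^{(t)}_i$ be an arbitrary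 spanning forest of $H^{(t)}_i$ containing $\hat F^{(t)}_{{\rm inh},i}$ (these arbitrary choices are the ''admissible choices''). *)

From HB Require Import structures.
From mathcomp Require Import all_boot all_order all_algebra.
From mathcomp Require Import boolp classical_sets reals.
Set Implicit Arguments.
Unset Strict Implicit.
Unset Printing Implicit Defensive.
Import Order.TTheory GRing.Theory Num.Theory.
Local Open Scope ring_scope.

(* edge is a 2-element set [set x; y]; an edge set is a set of these.  *)
Section Graphs.
Variable X : finType.

Definition frel (F : {set {set X}}) : rel X := fun x y => [set x; y] \in F.

Definition acyclic (F : {set {set X}}) : Prop :=
  ~ exists s : seq X, [/\ uniq s, (3 <= size s)%N & cycle (frel F) s].

Definition spanning_forest (E F : {set {set X}}) : Prop :=
  [/\ F \subset E, acyclic F &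
      forall x y : X, [set x; y] \in E -> connect (frel F) x y].
End Graphs.

(* Online instances.  The n demand pairs arrive in the order 0..n-1;  *)
(* terminal (j, false) is u_j and (j, true) is v_j.                    *)
Definition term (n : nat) := ('I_n * bool)%type.

Definition mate (n : nat) (x : term n) : term n := (x.1, ~~ x.2).

Section Instance.
Variables (R : realType) (n : nat) (d : term n -> term n -> R).

Definition is_metric_ge1 : Prop :=
  (forall x, d x x = 0) /\ (forall x y, d x y = d y x) /\
  (forall x y z, d x z <= d x y + d y z) /\
  (forall x y, x != y -> 1 <= d x y).

Definition Vt (t : nat) : {set term n} := [set x : term n | (x.1 < t)%N].

Lemma exists_pow2_ge (x : R) : exists k : nat, x <= 2 ^+ k.
Proof.
have [x0|x0] := leP x 0.
  by exists 0%N; rewrite expr0 (le_trans x0) ?ler01.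
exists (Num.bound x).
apply: (le_trans (ltW (archi_boundP (ltW x0)))).
by rewrite -natrX ler_nat ltnW // ltn_expl.
Qed.

(* level(v) = ceil(log2 dist(v, mate v)) = least k with dist <= 2^k
   (distances are >= 1, so this is the ceiling of the binary log) *)
Definition lev (x : term n) : nat :=
  ex_minn (exists_pow2_ge (d x (mate x))).

Definition levC (C : {set term n}) : nat := (\max_(v in C) lev v)%N.

(* edge weight in the graph obtained by contracting the clusters of P *)
Definition cw (P : {set {set term n}}) (x y : term n) : R :=
  if finset.pblock P x == finset.pblock P y then 0 else d x y.

Fixpoint wlen (P : {set {set term n}}) (x : term n) (s : seq (term n)) : R :=
  if s is y :: s' then cw P x y + wlen P y s' else 0.

(* shortest-path distance between clusters C1, C2 in M / P, where the
   underlying vertex set is cover P *)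
Definition cdist (P : {set {set term n}}) (C1 C2 : {set term n}) : R :=
  inf [set r : R | exists (x : term n) (s : seq (term n)),
        [/\ x \in C1, last x s \in C2, all (fun z => z \in finset.cover P) (x :: s)
          & r = wlen P x s]].

Definition act (P : {set {set term n}}) (i : nat) : {set {set term n}} :=
  [set C in P | (i <= levC C)%N].

Definition hadj (P : {set {set term n}}) (i : nat) : rel {set term n} :=
  fun A B => [&& A \in act P i, B \in act P i, A != B &
                 cdist P A B < 2 ^+ i.+1].

Definition hedges (P : {set {set term n}}) (i : nat) : {set {set {set term n}}} :=
  [set [set A; B] | A in act P i, B in act P i & hadj P i A B].

Definition step (P : {set {set term n}}) (i : nat) : {set {set term n}} :=
  [set C in P | (levC C < i)%N] :|:
  [set (\bigcup_(B | connect (hadj P i) A B) B) | A in act P i].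

(* clustering C^(t)_i of the instance after t arrivals; for i > L^(t)
   nothing is active, so this is C^(t)_{L+1}, and for t = 0 it is empty *)
Fixpoint clus (t i : nat) : {set {set term n}} :=
  if i is i'.+1 then step (clus t i') i' else [set [set x] | x in Vt t].

(* edge set of H^(t)_i (empty for i > L^(t) and for t = 0) *)
Definition Hedges (t i : nat) := hedges (clus t i) i.

(* inherited edges of H^(t)_i, w.r.t. the forest Fprev = hat F^(t-1)_i:
   edges {D1,D2} of H^(t)_i such that some edge {C1,C2} of Fprev has
   C1 contained in D1 and C2 contained in D2 *)
Definition inh_edges (t i : nat) (Fprev : {set {set {set term n}}}) :=
  [set e in Hedges t i |
    [exists D1 : {set term n}, exists D2 : {set term n},
     exists C1 : {set term n}, exists C2 : {set term n},
      [&& e == [set D1; D2], [set C1; C2] \in Fprev,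
          C1 \subset D1 & C2 \subset D2]]].

(* admissible choice of the virtual forests hat F^(t)_i (F) and
   hat F^(t)_{inh,i} (Finh), for 1 <= t <= n and all levels i *)
Definition admissible
    (Finh F : nat -> nat -> {set {set {set term n}}}) : Prop :=
  (forall i, F 0%N i = finset.set0) /\
  (forall t i, (1 <= t <= n)%N ->
     [/\ spanning_forest (inh_edges t i (F t.-1 i)) (Finh t i),
         spanning_forest (Hedges t i) (F t i) &
         Finh t i \subset F t i]).

(* a solution is a set of edges (x,y) of the complete graph on V *)
Definition srel (S : {set term n * term n}) : rel (term n) :=
  fun x y => ((x, y) \in S) || ((y, x) \in S).

Definition feasible (S : {set term n * term n}) : Prop :=
  forall j : 'I_n, connect (srel S) (j, false) (j, true).

Definition cost (S : {set term n * term n}) : R := \sum_(p in S) d p.1 p.2.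

Definition OPT : R := inf [set r : R | exists S, feasible S /\ r = cost S].

End Instance.

(* Fix the level i and let kappa_t be the number of components of the forest
   hat F^(t)_i on the i-active clusters of time t.  Clusterings only coarsen
   as pairs arrive, so the components of hat F^(t-1)_i survive through
   inherited edges, and the inherited forest has at most kappa_(t-1) + f_t
   components, where f_t counts the fresh active clusters (those containing
   no active cluster of time t-1).  Each edge of the forest hat F^(t)_i
   outside hat F^(t)_inh,i joins two of these components, hence
   |hat F^(t)_i \ hat F^(t)_inh,i| + kappa_t <= kappa_(t-1) + f_t.
   A fresh active cluster contains a terminal of the t-th pair of level
   >= i that is 2^i-far from every earlier terminal of level >= i (a closer
   one would already lie in its cluster); call it a pioneer.  Telescoping,
   the number of non-inherited edges is at most the number of pioneers.
   Pioneers are pairwise 2^(i-1)-separated and 2^(i-1)-far from their mates,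
   so the moats z |-> max(0, r - d(q, z)) with r = 2^i/4 are 1-Lipschitz and
   at most one of them is nonzero at any point; every feasible solution
   must climb each moat from q to its mate, so its cost is at least
   #pioneers * r / 2, which gives the constant c = 16. *)

From Pilot Require Import Defs.
From HB Require Import structures.
From mathcomp Require Import all_boot all_order all_algebra.
From mathcomp Require Import boolp classical_sets reals.
From mathcomp Require Import fintype finset fingraph lra.
Import Order.TTheory GRing.Theory Num.Theory.
Local Open Scope ring_scope.
Set Implicit Arguments.
Unset Strict Implicit.
Unset Printing Implicit Defensive.

(** * Counting the components of a forest *)

Section CoarserImage.
Variables (T U W : finType) (f : T -> U) (g : T -> W) (A : {set T}).
Hypothesis fg : {in A &, forall x y, g x = g y -> f x = f y}.

Let h (w : W) : option U := omap f [pick x in A | g x == w].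

Let h_g x : x \in A -> h (g x) = Some (f x).
Proof.
move=> xA; rewrite /h; case: pickP => [y /andP[yA /eqP gy] /=|/(_ x)].
  by rewrite (fg yA xA gy).
by rewrite xA eqxx.
Qed.

Let Some_imset : Some @: (f @: A) = h @: (g @: A).
Proof.
rewrite -!imset_comp; apply: eq_in_imset => x xA /=.
by rewrite h_g.
Qed.

Lemma leq_card_imset_coarser : (#|f @: A| <= #|g @: A|)%N.
Proof.
by rewrite -(card_imset _ (@Some_inj _)) Some_imset leq_imset_card.
Qed.

Lemma ltn_card_imset_coarser a b : a \in A -> b \in A ->
  f a = f b -> g a != g b -> (#|f @: A| < #|g @: A|)%N.
Proof.
move=> aA bA fab gab; rewrite -(card_imset _ (@Some_inj _)) Some_imset.
rewrite ltn_neqAle leq_imset_card andbT; apply/imset_injP => inj.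
have := inj _ _ (imset_f g aA) (imset_f g bA).
by rewrite !h_g // fab => /(_ erefl); apply/eqP.
Qed.

End CoarserImage.

Lemma connect_homo_in (T T' : finType) (e : rel T) (e' : rel T') (f : T -> T')
    (a : pred T) x y :
  (forall u v, a u -> e u v -> a v) ->
  (forall u v, a u -> e u v -> connect e' (f u) (f v)) ->
  a x -> connect e x y -> connect e' (f x) (f y).
Proof.
move=> ae ee' + /connectP[p + ->]; elim: p x => [|z p IH] x ax //= /andP[xz zp].
exact: connect_trans (ee' _ _ ax xz) (IH _ (ae _ _ ax xz) zp).
Qed.

Section ForestCount.
Variable X : finType.
Implicit Types (A B V : {set X}) (E F G : {set {set X}}).

Definition ncomp V E := #|[set root (Defs.frel E) x | x in V]|.

Lemma frel_sym E : symmetric (Defs.frel E).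
Proof. by move=> x y; rewrite /Defs.frel setUC. Qed.

Lemma frel_connect_sym E : connect_sym (Defs.frel E).
Proof. exact/sym_connect_sym/frel_sym. Qed.

Lemma connect_frelS E E' :
  E \subset E' -> subrel (connect (Defs.frel E)) (connect (Defs.frel E')).
Proof. by move=> sEE'; apply: connect_sub => x y /(subsetP sEE') Exy; exact: connect1. Qed.

Lemma frel_root_homo (f : X -> X) V E E' :
  {in V &, forall u v, connect (Defs.frel E) u v -> connect (Defs.frel E') (f u) (f v)} ->
  {in V &, forall u v, root (Defs.frel E) u = root (Defs.frel E) v ->
    root (Defs.frel E') (f u) = root (Defs.frel E') (f v)}.
Proof.
move=> fEE' u v uV vV.
by move/(rootP (frel_connect_sym E))/(fEE' _ _ uV vV)/(rootP (frel_connect_sym E')).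
Qed.

Lemma leq_ncomp V E E' :
  {in V &, subrel (connect (Defs.frel E)) (connect (Defs.frel E'))} ->
  (ncomp V E' <= ncomp V E)%N.
Proof. by move=> sEE'; apply: leq_card_imset_coarser; exact: (@frel_root_homo id). Qed.

Lemma ltn_ncomp V E E' a b :
  {in V &, subrel (connect (Defs.frel E)) (connect (Defs.frel E'))} ->
  a \in V -> b \in V -> connect (Defs.frel E') a b -> ~~ connect (Defs.frel E) a b ->
  (ncomp V E' < ncomp V E)%N.
Proof.
move=> sEE' aV bV E'ab Eab.
apply: (ltn_card_imset_coarser (@frel_root_homo id _ _ _ sEE') aV bV).
  exact/(rootP (frel_connect_sym E')).
by rewrite root_connect //; exact: frel_connect_sym.
Qed.

Lemma leq_ncompU A B E : (ncomp (A :|: B) E <= ncomp A E + #|B|)%N.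
Proof. by rewrite /ncomp imsetU (leq_trans (leq_card_setU _ _)) ?leq_add2l ?leq_imset_card. Qed.

Lemma leq_ncomp_imset (f : X -> X) A E E' :
  {in A &, forall u v, connect (Defs.frel E) u v -> connect (Defs.frel E') (f u) (f v)} ->
  (ncomp (f @: A) E' <= ncomp A E)%N.
Proof.
by move=> fEE'; rewrite /ncomp -imset_comp; apply: leq_card_imset_coarser; exact: frel_root_homo.
Qed.

Lemma forest_edge_not_connect F G a b : acyclic F -> G \subset F ->
  [set a; b] \in F :\: G -> a != b -> ~~ connect (Defs.frel G) a b.
Proof.
move=> acF sGF /setDP[abF abG] ab; apply/negP => /connectP[p pG lp].
case: (shortenP pG) lp => q qG uq _ lq {p pG}.
apply: acF; exists (a :: q); split => //.
  case: q qG uq lq => [_ _ ba|c [|c' q]] //=; first by rewrite ba eqxx in ab.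
  by move=> /andP[acG _] _ cb; move: acG; rewrite /Defs.frel -cb (negPf abG).
rewrite /cycle rcons_path -lq (sub_path _ qG) /=; last first.
  by move=> x y; rewrite /Defs.frel => /(subsetP sGF).
by rewrite /Defs.frel setUC.
Qed.

Lemma card_forest_diff V F G : acyclic F -> G \subset F ->
  {in F, forall e, exists a b, [/\ a != b, a \in V, b \in V & e = [set a; b]]} ->
  (#|F :\: G| + ncomp V F <= ncomp V G)%N.
Proof.
move=> acF + Fe; move Ek: #|F :\: G| => k.
elim: k G Ek => [|k IH] G Ek sGF.
  by rewrite add0n; apply: leq_ncomp => x y _ _; exact: connect_frelS.
have [e eFG] : exists e, e \in F :\: G by apply/set0Pn; rewrite -card_gt0 Ek.
have /setDP[eF eG] := eFG.
have [a [b [ab aV bV de]]] := Fe e eF.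
have sGeF : e |: G \subset F by rewrite subUset sub1set eF sGF.
have Ek' : #|F :\: (e |: G)| = k.
  by move: Ek; rewrite (cardsD1 e) eFG setUC -setDDl => -[].
rewrite addSn; apply: leq_ltn_trans (IH _ Ek' sGeF) _.
apply: (ltn_ncomp _ aV bV).
- by move=> x y _ _; apply: connect_frelS; exact: subsetUr.
- by apply: connect1; rewrite /Defs.frel -de setU11.
- by apply: forest_edge_not_connect acF sGF _ ab; rewrite -de.
Qed.

End ForestCount.

(** * Partitions and refinement *)

Section Refinement.
Variable T : finType.
Implicit Types (A B C D : {set T}) (P Q : {set {set T}}).

Definition refines P Q := forall C, C \in P -> exists2 D, D \in Q & C \subset D.

Definition parent Q C := odflt C [pick D in Q | C \subset D].

Lemma parentP P Q C : refines P Q -> C \in P -> parent Q C \in Q /\ C \subset parent Q C.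
Proof.
move=> PQ CP; rewrite /parent; case: pickP => [D /andP[] //|].
by have [D DQ CD] := PQ C CP => /(_ D); rewrite DQ CD.
Qed.

Lemma cover_refines P Q : refines P Q -> cover P \subset cover Q.
Proof.
move=> PQ; apply/subsetP => x /bigcupP[C CP xC].
by have [D DQ /subsetP CD] := PQ C CP; apply/bigcupP; exists D; last exact: CD.
Qed.

Lemma card_blocks_le P (S : {set T}) : trivIset P ->
  {in P, forall B, exists2 x, x \in B & x \in S} -> (#|P| <= #|S|)%N.
Proof.
move=> tP PS; apply: leq_trans (leq_imset_card (pblock P) S); apply/subset_leq_card.
by apply/subsetP => B BP; have [x xB xS] := PS B BP; rewrite -(def_pblock tP BP xB) imset_f.
Qed.

Lemma trivIset_block_eq P : trivIset P ->
  forall A B x, A \in P -> B \in P -> x \in A -> x \in B -> A = B.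
Proof. by move=> tP A B x AP BP xA xB; rewrite -(def_pblock tP AP xA) (def_pblock tP BP xB). Qed.

Lemma partition_of_blocks P D :
  set0 \notin P -> cover P = D ->
  (forall A B x, A \in P -> B \in P -> x \in A -> x \in B -> A = B) ->
  partition P D.
Proof.
move=> P0 PD eqAB; rewrite /partition PD eqxx P0 andbT /=.
apply/trivIsetP => A B AP BP; rewrite -setI_eq0; apply: contraNT => /set0Pn[x].
by rewrite inE => /andP[xA xB]; rewrite (eqAB A B x) ?eqxx.
Qed.

End Refinement.

(** * The contracted metric *)

Section Metric.
Variables (R : realType) (n : nat) (d : term n -> term n -> R).
Hypothesis dm : is_metric_ge1 d.
Implicit Types (x y z : term n) (A B C D : {set term n}) (P : {set {set term n}}).

Lemma d_refl x : d x x = 0. Proof. by case: dm. Qed.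
Lemma d_sym x y : d x y = d y x. Proof. by case: dm => _ []. Qed.
Lemma d_triangle x y z : d x z <= d x y + d y z. Proof. by case: dm => _ [_ []]. Qed.
Lemma d_ge1 x y : x != y -> 1 <= d x y. Proof. by case: dm => _ [_ [_]]; apply. Qed.
Lemma d_ge0 x y : 0 <= d x y.
Proof. by have := d_triangle x y x; rewrite d_refl (d_sym y x); lra. Qed.

Lemma cw_ge0 P x y : 0 <= cw d P x y.
Proof. by rewrite /cw; case: ifP => // _; exact: d_ge0. Qed.

Lemma cw_le P x y : cw d P x y <= d x y.
Proof. by rewrite /cw; case: ifP => // _; exact: d_ge0. Qed.

Lemma cw_sym P x y : cw d P x y = cw d P y x.
Proof. by rewrite /cw eq_sym d_sym. Qed.

Lemma wlen_ge0 P x s : 0 <= wlen d P x s.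
Proof. by elim: s x => //= y s IH x; rewrite addr_ge0 ?cw_ge0. Qed.

Lemma wlen_rcons P x s z :
  wlen d P x (rcons s z) = wlen d P x s + cw d P (last x s) z.
Proof. by elim: s x => [|y s IH] x /=; rewrite ?addr0 ?add0r // IH addrA. Qed.

Lemma wlen_rev P x s : wlen d P (last x s) (rev (belast x s)) = wlen d P x s.
Proof.
elim: s x => [|y s IH] x //=.
have lastE : last (last y s) (rev (belast y s)) = y.
  by have := congr1 (last y) (congr1 rev (lastI y s)); rewrite rev_rcons rev_cons last_rcons.
by rewrite rev_cons wlen_rcons IH lastE addrC cw_sym.
Qed.

Definition walk_lengths P A B : set R :=
  [set r : R | exists x s, [/\ x \in A, last x s \in B,
    all (fun z => z \in cover P) (x :: s) & r = wlen d P x s]].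

Lemma cdistE P A B : cdist d P A B = inf (walk_lengths P A B).
Proof. by []. Qed.

Lemma walk_lengths_lbound P A B : has_lbound (walk_lengths P A B).
Proof. by exists 0 => r [x [s [_ _ _ ->]]]; exact: wlen_ge0. Qed.

Lemma cdist_le P A B x y : x \in A -> y \in B -> x \in cover P -> y \in cover P ->
  cdist d P A B <= d x y.
Proof.
move=> xA yB xP yP; apply: le_trans (cw_le P x y).
rewrite cdistE -[cw d P x y]addr0; apply: (ge_inf (walk_lengths_lbound P A B)).
by exists x, [:: y]; rewrite /= xP yP.
Qed.

Lemma cdist_sym P A B : cdist d P A B = cdist d P B A.
Proof.
suff sub A' B' : (walk_lengths P A' B' `<=` walk_lengths P B' A')%classic.
  by rewrite !cdistE; congr inf; apply/seteqP; split; apply: sub.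
move=> r [x [s [xA sB sP ->]]]; exists (last x s), (rev (belast x s)).
have revE : last x s :: rev (belast x s) = rev (x :: s) by rewrite [x :: s]lastI rev_rcons.
split=> //; last by rewrite wlen_rev.
- by case: s {sB sP revE} => //= y s; rewrite rev_cons last_rcons.
- by rewrite revE all_rev.
Qed.

Lemma cw_mono P Q x y : trivIset Q -> refines P Q ->
  x \in cover P -> y \in cover P -> cw d Q x y <= cw d P x y.
Proof.
move=> tQ PQ xP yP; rewrite /cw; have [exy|_] := eqVneq (pblock P x) (pblock P y).
  have [D DQ /subsetP sD] := PQ _ (pblock_mem xP).
  have xD : x \in D by rewrite sD ?mem_pblock.
  have yD : y \in D by rewrite sD // exy mem_pblock.
  by rewrite (def_pblock tQ DQ xD) (def_pblock tQ DQ yD) eqxx.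
by case: ifP => _ //; exact: d_ge0.
Qed.

Lemma wlen_mono P Q x s : trivIset Q -> refines P Q ->
  all (fun z => z \in cover P) (x :: s) -> wlen d Q x s <= wlen d P x s.
Proof.
move=> tQ PQ; elim: s x => [|y s IH] x //= /and3P[xP yP sP].
by rewrite lerD ?cw_mono ?IH //= yP.
Qed.

Lemma cdist_mono P Q A B A' B' : trivIset Q -> refines P Q ->
  A \subset A' -> B \subset B' -> A != set0 -> B != set0 ->
  A \subset cover P -> B \subset cover P -> cdist d Q A' B' <= cdist d P A B.
Proof.
move=> tQ PQ /subsetP AA' /subsetP BB' /set0Pn[a aA] /set0Pn[b bB] /subsetP AP /subsetP BP.
rewrite cdistE; apply: lb_le_inf.
  by exists (wlen d P a [:: b]), a, [:: b]; rewrite /= AP ?BP.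
move=> r [x [s [xA sB sP ->]]]; apply: le_trans (wlen_mono tQ PQ sP).
apply: (ge_inf (walk_lengths_lbound Q A' B')); exists x, s; split; rewrite ?AA' ?BB' //.
by apply: sub_all sP => z; apply: (subsetP (cover_refines PQ)).
Qed.

(** * The clustering procedure *)

Lemma levC_mono C D : C \subset D -> (levC d C <= levC d D)%N.
Proof. by move/subsetP=> CD; apply/bigmax_leqP => v vC; apply: leq_bigmax_cond; exact: CD. Qed.

Lemma lev_le_levC C v : v \in C -> (lev d v <= levC d C)%N.
Proof. exact: leq_bigmax_cond. Qed.

Lemma levC_witness C i : C != set0 -> (i <= levC d C)%N ->
  exists2 v, v \in C & (i <= lev d v)%N.
Proof.
move=> /set0Pn[x xC]; case: i => [|i] iC; first by exists x.
apply/exists_inP; apply: contraTT iC; rewrite negb_exists_in -leqNgt.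
by move=> /forall_inP iv; apply/bigmax_leqP => v /iv; rewrite -leqNgt.
Qed.

Lemma mate_neq x : x != mate x.
Proof. by case: x => j [] /=; rewrite /mate xpair_eqE eqxx. Qed.

Lemma lev_mate_dist i x : (i <= lev d x)%N -> 2 ^+ i <= 2 * d x (mate x).
Proof.
rewrite /lev; case: ex_minnP => m _ minm; case: i => [_|i im].
  by have := d_ge1 (mate_neq x); rewrite expr0; lra.
rewrite exprS ler_pM2l // leNgt; apply/negP => /ltW /minm.
by rewrite leqNgt im.
Qed.

Definition merge P i A := \bigcup_(B | connect (hadj d P i) A B) B.

Lemma in_act P i A : (A \in act d P i) = (A \in P) && (i <= levC d A)%N.
Proof. by rewrite inE. Qed.

Lemma hadj_sym P i : symmetric (hadj d P i).
Proof.
by move=> A B; rewrite /hadj (cdist_sym P A B) eq_sym; do 2 case: (_ \in act d P i).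
Qed.

Lemma hadj_connect_sym P i : connect_sym (hadj d P i).
Proof. exact/sym_connect_sym/hadj_sym. Qed.

Lemma act_connect P i A B :
  A \in act d P i -> connect (hadj d P i) A B -> B \in act d P i.
Proof.
have closed_act : closed (hadj d P i) (act d P i) by move=> X Y /and4P[-> ->].
by move=> Aa /(closed_connect closed_act) <-.
Qed.

Lemma mem_merge P i A x :
  reflect (exists2 B, connect (hadj d P i) A B & x \in B) (x \in merge P i A).
Proof. exact: (iffP bigcupP) => -[B]; exists B. Qed.

Lemma sub_merge P i A : A \subset merge P i A.
Proof. by apply/subsetP => x xA; apply/mem_merge; exists A. Qed.

Lemma merge_eq P i A A' : connect (hadj d P i) A A' -> merge P i A = merge P i A'.
Proof. by move=> AA'; apply: eq_bigl => B; rewrite (same_connect (hadj_connect_sym P i) AA'). Qed.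

Lemma merge_in_step P i A : A \in act d P i -> merge P i A \in step d P i.
Proof. by move=> Aa; rewrite inE; apply/orP; right; exact: imset_f. Qed.

Lemma inactive_in_step P i X : X \in P -> (levC d X < i)%N -> X \in step d P i.
Proof. by move=> XP Xi; rewrite !inE XP Xi. Qed.

Lemma stepP P i X : X \in step d P i ->
  (X \in P /\ (levC d X < i)%N) \/ exists2 A, A \in act d P i & X = merge P i A.
Proof. by rewrite !inE => /orP[/andP[]|/imsetP[A Aa ->]]; [left | right; exists A]. Qed.

Lemma merge_blocks P i A B : A \in act d P i -> connect (hadj d P i) A B ->
  B \in P /\ (i <= levC d B)%N.
Proof. by move=> Aa /(act_connect Aa); rewrite in_act => /andP[]. Qed.

Section StepPartition.
Variables (P : {set {set term n}}) (V : {set term n}) (i : nat).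
Hypothesis PV : partition P V.

Let block_eq := trivIset_block_eq (partition_trivIset PV).

Lemma inactive_merge_disjoint X A x : X \in P -> (levC d X < i)%N ->
  A \in act d P i -> x \in X -> x \in merge P i A -> False.
Proof.
move=> XP Xi Aa xX /mem_merge[B AB xB]; have [BP Bi] := merge_blocks Aa AB.
by move: Xi; rewrite (block_eq XP BP xX xB) ltnNge Bi.
Qed.

Lemma step_block_eq X Y x : X \in step d P i -> Y \in step d P i ->
  x \in X -> x \in Y -> X = Y.
Proof.
case/stepP=> [[XP Xi]|[A Aa ->]] /stepP[[YP Yi]|[A' Aa' ->]] xX xY.
- exact: block_eq xX xY.
- by case: (inactive_merge_disjoint XP Xi Aa' xX xY).
- by case: (inactive_merge_disjoint YP Yi Aa xY xX).
move/mem_merge: xX => [B AB xB]; move/mem_merge: xY => [B' A'B' xB'].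
have [[BP _] [B'P _]] := (merge_blocks Aa AB, merge_blocks Aa' A'B').
move: A'B'; rewrite -(block_eq BP B'P xB xB') => A'B.
by apply: merge_eq; apply: connect_trans AB _; rewrite hadj_connect_sym.
Qed.

Lemma step_partition : partition (step d P i) V.
Proof.
have P0 := partition_neq0 PV; rewrite -(cover_partition PV).
apply: partition_of_blocks; last exact: step_block_eq.
  apply/negP => /stepP[[/P0] |[A Aa A0]]; first by rewrite eqxx.
  have [AP _] := merge_blocks Aa (connect0 _ A).
  by move: (P0 _ AP) (sub_merge P i A); rewrite -A0 subset0 => /negPf ->.
apply/setP => x; apply/bigcupP/bigcupP => [[X /stepP[[XP _]|[A Aa ->]] xX]|[B BP xB]].
- by exists X.
- by case/mem_merge: xX => B AB xB; exists B => //; case: (merge_blocks Aa AB).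
have [Bi|iB] := ltnP (levC d B) i; first by exists B => //; exact: inactive_in_step.
have Ba : B \in act d P i by rewrite in_act BP.
by exists (merge P i B); [exact: merge_in_step | exact: (subsetP (sub_merge P i B))].
Qed.

End StepPartition.

Lemma clus_partition t i : partition (clus d t i) (Vt n t).
Proof.
elim: i => [|i IH]; last exact: step_partition.
apply: partition_of_blocks.
- by apply/imsetP => -[x _ /setP /(_ x)]; rewrite !inE eqxx.
- by apply/setP => x; apply/bigcupP/idP => [[_ /imsetP[y yV ->]]|xV];
    [rewrite inE => /eqP -> | exists [set x]; rewrite ?set11 ?imset_f].
- by move=> _ _ x /imsetP[y _ ->] /imsetP[z _ ->]; rewrite !inE => /eqP <- /eqP <-.
Qed.

Lemma clus_block_eq t i : forall A B x, A \in clus d t i -> B \in clus d t i ->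
  x \in A -> x \in B -> A = B.
Proof. exact/trivIset_block_eq/partition_trivIset/clus_partition. Qed.

Lemma clus_cover t i x : x \in Vt n t -> exists2 C, C \in clus d t i & x \in C.
Proof.
rewrite -(cover_partition (clus_partition t i)) => xP.
by exists (pblock (clus d t i) x); rewrite ?pblock_mem ?mem_pblock.
Qed.

Lemma clus_sub t i C : C \in clus d t i -> C \subset Vt n t.
Proof. by move=> CP; rewrite -(cover_partition (clus_partition t i)); exact: bigcup_sup. Qed.

Lemma clus_neq0 t i C : C \in clus d t i -> C != set0.
Proof. exact/partition_neq0/clus_partition. Qed.

Lemma parent_act P Q i A : refines P Q -> A \in act d P i -> parent Q A \in act d Q i.
Proof.
move=> PQ; rewrite !in_act => /andP[AP Ai]; have [AQ sA] := parentP PQ AP.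
by rewrite AQ (leq_trans Ai (levC_mono sA)).
Qed.

Lemma hadj_parent P Q V i A B : partition P V -> trivIset Q -> refines P Q ->
  hadj d P i A B -> parent Q A != parent Q B -> hadj d Q i (parent Q A) (parent Q B).
Proof.
move=> PV tQ PQ /and4P[Aa Ba _ AB] pAB.
rewrite /hadj (parent_act PQ Aa) (parent_act PQ Ba) pAB /=.
move: Aa Ba; rewrite !in_act => /andP[AP _] /andP[BP _].
have cov C : C \in P -> C \subset cover P by move=> CP; exact: bigcup_sup.
apply: le_lt_trans AB; apply: cdist_mono => //;
  by [exact: (parentP PQ _).2 | exact: partition_neq0 PV _ | exact: cov].
Qed.

Lemma connect_hadj_parent P Q V i A B : partition P V -> trivIset Q -> refines P Q ->
  A \in act d P i -> connect (hadj d P i) A B ->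
  connect (hadj d Q i) (parent Q A) (parent Q B).
Proof.
move=> PV tQ PQ; apply: connect_homo_in => [u v _ /and4P[] //|u v _ uv].
have [->|puv] := eqVneq (parent Q u) (parent Q v); first exact: connect0.
exact/connect1/(hadj_parent PV).
Qed.

Lemma step_refines P Q V W i : partition P V -> partition Q W -> refines P Q ->
  refines (step d P i) (step d Q i).
Proof.
move=> PV QW PQ X /stepP[[XP Xi]|[A Aa ->]].
  have [XQ sX] := parentP PQ XP.
  have [Ci|iC] := ltnP (levC d (parent Q X)) i.
    by exists (parent Q X) => //; exact: inactive_in_step.
  have Ca : parent Q X \in act d Q i by rewrite in_act XQ.
  by exists (merge Q i (parent Q X)); rewrite ?merge_in_step // (subset_trans sX) ?sub_merge.
exists (merge Q i (parent Q A)); first exact/merge_in_step/(parent_act PQ Aa).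
apply/subsetP => x /mem_merge[B AB xB]; apply/mem_merge; exists (parent Q B).
  exact: connect_hadj_parent PV (partition_trivIset QW) PQ Aa AB.
have [BP _] := merge_blocks Aa AB.
exact: subsetP (parentP PQ BP).2 x xB.
Qed.

Lemma clus_refines t i : refines (clus d t i) (clus d t.+1 i).
Proof.
elim: i => [|i IH].
  move=> _ /imsetP[x xV ->]; exists [set x] => //; apply: imset_f.
  by move: xV; rewrite !inE => /ltnW.
exact: step_refines (clus_partition t i) (clus_partition t.+1 i) IH.
Qed.

Lemma close_terminals_same_cluster t j x y : x \in Vt n t -> y \in Vt n t ->
  (j <= lev d x)%N -> (j <= lev d y)%N -> d x y < 2 ^+ j ->
  exists2 W, W \in clus d t j & (x \in W) && (y \in W).
Proof.
case: j => [|j] xV yV xj yj xy.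
  have -> : y = x by apply/eqP; apply: contraTT xy; rewrite -leNgt expr0 eq_sym; exact: d_ge1.
  by exists [set x]; rewrite ?set11 ?imset_f.
have [A AP xA] := clus_cover j xV; have [B BP yB] := clus_cover j yV.
have Aa : A \in act d (clus d t j) j by rewrite in_act AP (leq_trans (ltnW xj)) ?lev_le_levC.
have Ba : B \in act d (clus d t j) j by rewrite in_act BP (leq_trans (ltnW yj)) ?lev_le_levC.
exists (merge (clus d t j) j A); first exact: merge_in_step.
rewrite (subsetP (sub_merge _ _ A)) //=; apply/mem_merge; exists B => //.
have [<-|AB] := eqVneq A B; first exact: connect0.
apply/connect1/and4P; split => //; apply: le_lt_trans xy.
by apply: cdist_le; rewrite // (cover_partition (clus_partition t j)).
Qed.

Lemma clus0 j : clus d 0 j = set0.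
Proof.
elim: j => [|j IH] /=; apply/setP => C; rewrite !inE.
  by apply/negbTE/imsetP => -[x]; rewrite inE.
by rewrite IH !inE /=; apply/negbTE/imsetP => -[A]; rewrite !inE.
Qed.

Lemma pair_hadj P j a b : [set a; b] \in hedges d P j -> hadj d P j a b.
Proof.
case/imset2P=> A B _; rewrite inE => /andP[_ AB] abAB.
have ab : a != b.
  apply: contraTneq AB => eab; move: (set21 A B) (set22 A B).
  by rewrite -abAB -eab setUid !inE => /eqP-> /eqP->; rewrite /hadj eqxx !andbF.
have /set2P[ea|ea] : a \in [set A; B] by rewrite -abAB set21.
all: have /set2P[eb|eb] : b \in [set A; B] by rewrite -abAB set22.
all: by move: ab; rewrite ea eb ?eqxx // => _; rewrite // hadj_sym.
Qed.

(** * Separated terminals force a large optimum *)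

Lemma srel_sym (S : {set term n * term n}) : symmetric (srel S).
Proof. by move=> x y; rewrite /srel orbC. Qed.

Lemma path_srelD1 (S : {set term n * term n}) e x y p :
  (e.1 = x \/ e.2 = x) -> x \notin y :: p -> path (srel S) y p ->
  path (srel (S :\ e)) y p.
Proof.
move=> ex; have ne u v : x != u -> x != v -> (u, v) != e.
  by move=> xu xv; apply/eqP => uve; case: ex; rewrite -uve /= => ex; [move: xu | move: xv];
    rewrite ex eqxx.
elim: p y => [|z p IH] y //=; rewrite !inE !negb_or => /and3P[xy xz xp].
case/andP=> Syz zp; rewrite IH ?inE ?negb_or ?xz // andbT.
by move: Syz; rewrite /srel !inE !ne.
Qed.

Lemma path_variation_le (f : term n -> R) (S : {set term n * term n}) x p :
  path (srel S) x p -> uniq (x :: p) ->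
  `|f x - f (last x p)| <= \sum_(q in S) `|f q.1 - f q.2|.
Proof.
elim: p x S => [|y p IH] x S /=.
  by rewrite subrr normr0 => _ _; apply: sumr_ge0.
case/andP=> Sxy yp /andP[xp up].
pose e := if (x, y) \in S then (x, y) else (y, x).
have eS : e \in S by move: Sxy; rewrite /e /srel; case: ifP.
have ex : e.1 = x \/ e.2 = x by rewrite /e; case: ifP; [left | right].
have fe : `|f x - f y| = `|f e.1 - f e.2| by rewrite /e; case: ifP => //= _; rewrite distrC.
rewrite (bigD1 e eS) /=; apply: le_trans (ler_distD (f y) _ _) _.
rewrite fe lerD2l (eq_bigl [in S :\ e]) => [|q]; last by rewrite !inE andbC.
exact: IH (path_srelD1 ex xp yp) up.
Qed.

Lemma connect_variation_le (f : term n -> R) (S : {set term n * term n}) x y :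
  connect (srel S) x y -> `|f x - f y| <= \sum_(q in S) `|f q.1 - f q.2|.
Proof.
by case/connectP=> p /shortenP[q Sq uq _] ->; exact: path_variation_le.
Qed.

Section SeparatedTerminals.
Variables (i : nat) (Q : {set term n}).
Hypothesis Q_mate : {in Q, forall q, 2 ^+ i <= 2 * d q (mate q)}.
Hypothesis Q_sep : {in Q &, forall q q', q != q' -> 2 ^+ i <= 2 * d q q'}.

Let r : R := 2 ^+ i / 4.

Let r_gt0 : 0 < r.
Proof. by rewrite divr_gt0 ?exprn_gt0. Qed.

Let r4 : 2 ^+ i = 4 * r.
Proof. by rewrite mulrC divfK ?pnatr_eq0. Qed.

Definition moat (q z : term n) : R := if d q z < r then r - d q z else 0.

Lemma moat_lipschitz q a b : `|moat q a - moat q b| <= d a b.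
Proof.
have := d_triangle q a b; have := d_triangle q b a; rewrite (d_sym b a).
have := d_ge0 q a; have := d_ge0 q b; have := d_ge0 a b.
rewrite /moat ler_norml; case: (ltP (d q a)); case: (ltP (d q b)) => *;
  by apply/andP; split; lra.
Qed.

Lemma card_moats_at_le1 a : (#|[set q in Q | (d q a < r)%R]| <= 1)%N.
Proof.
apply/card_le1_eqP => q q'; rewrite !inE => /andP[qQ qa] /andP[q'Q q'a].
have [//|qq'] := eqVneq q q'; exfalso.
have := Q_sep qQ q'Q qq'; have := d_triangle q a q'; rewrite (d_sym a q') r4; lra.
Qed.

Lemma sum_moat_le a b : \sum_(q in Q) `|moat q a - moat q b| <= 2 * d a b.
Proof.
pose near z q : R := if d q z < r then d a b else 0.
have near_le z : \sum_(q in Q) near z q <= d a b.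
  rewrite /near -big_mkcondr /= (eq_bigl [in [set q in Q | d q z < r]]) => [|q];
    last by rewrite inE.
  rewrite sumr_const; case: #|_| (card_moats_at_le1 z) => [|[|]] // _.
  by rewrite mulr0n d_ge0.
apply: le_trans (_ : \sum_(q in Q) (near a q + near b q) <= _).
  apply: ler_sum => q _; have := moat_lipschitz q a b; have := d_ge0 a b.
  rewrite /near /moat; case: (ltP (d q a)); case: (ltP (d q b)) => *;
    by rewrite ?subrr ?normr0; lra.
by rewrite big_split /=; have := near_le a; have := near_le b; lra.
Qed.

Lemma separated_cost_le S : feasible S -> #|Q|%:R * 2 ^+ i <= 8 * cost d S.
Proof.
move=> fS.
have moat_sum q : q \in Q -> r <= \sum_(p in S) `|moat q p.1 - moat q p.2|.
  move=> qQ; have qm : connect (srel S) q (mate q).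
    case: q qQ => j [] _; last exact: fS.
    by rewrite (sym_connect_sym (@srel_sym S)); exact: fS.
  apply: le_trans (connect_variation_le (moat q) qm).
  have := Q_mate qQ; rewrite r4 /moat d_refl r_gt0 subr0 => qm_r; case: ltP => [|_].
    by have := r_gt0; lra.
  by rewrite subr0 ger0_norm // ltW.
have : #|Q|%:R * r <= 2 * cost d S.
  apply: le_trans (_ : \sum_(q in Q) \sum_(p in S) `|moat q p.1 - moat q p.2| <= _).
    by rewrite mulr_natl -sumr_const; apply: ler_sum => q /moat_sum.
  rewrite exchange_big /cost big_distrr /=; apply: ler_sum => p _.
  exact: sum_moat_le.
by rewrite r4; have := r_gt0; lra.
Qed.

Lemma separated_OPT : #|Q|%:R * 2 ^+ i.+1 <= 16 * OPT d.
Proof.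
suff : #|Q|%:R * 2 ^+ i / 8 <= OPT d by rewrite exprS; lra.
apply: lb_le_inf => [|_ [S [fS ->]]]; last by have := separated_cost_le fS; lra.
exists (cost d [set ((j, false), (j, true)) | j : 'I_n]), [set ((j, false), (j, true)) | j : 'I_n].
by split=> // j; apply: connect1; rewrite /srel imset_f.
Qed.

End SeparatedTerminals.

(** * Charging non-inherited edges to pioneers *)

Definition pioneers i := [set x : term n | (i <= lev d x)%N &&
  [forall y : term n, ((y.1 < x.1)%N && (i <= lev d y)%N) ==> (2 ^+ i <= d x y)]].

Lemma card_arrivals_recr (Q : {set term n}) m :
  #|[set x in Q | (x.1 < m.+1)%N]| =
    (#|[set x in Q | (x.1 < m)%N]| + #|[set x in Q | x.1 == m :> nat]|)%N.
Proof.
rewrite -(cardsID [set x : term n | (x.1 < m)%N]); congr (_ + _)%N; apply: eq_card => x;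
  by rewrite !inE; case: (x \in Q); rewrite ?andbF //= ltnS; case: ltngtP.
Qed.

Section VirtualForests.
Variables (Finh F : nat -> nat -> {set {set {set term n}}}) (i : nat).
Hypothesis adm : admissible d Finh F.

Let P t := clus d t i.
Let active t := act d (P t) i.
Let ncompF t := ncomp (active t) (F t i).
Let fresh t := active t :\: parent (P t) @: active t.-1.

Lemma F_sub_Hedges t : (t <= n)%N -> F t i \subset Hedges d t i.
Proof.
case: adm => F0 Ft; case: t => [|t] tn; first by rewrite F0 sub0set.
by have [_ [] ] := Ft t.+1 i tn.
Qed.

Lemma parent_active t C :
  C \in active t -> parent (P t.+1) C \in active t.+1 /\ C \subset parent (P t.+1) C.
Proof.
move=> Ca; split; first exact: parent_act (@clus_refines t i) Ca.
by move: Ca; rewrite in_act => /andP[/(parentP (@clus_refines t i))[]].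
Qed.

Lemma inherited_connect t u v : (t < n)%N -> u \in active t ->
  connect (Defs.frel (F t i)) u v ->
  connect (Defs.frel (Finh t.+1 i)) (parent (P t.+1) u) (parent (P t.+1) v).
Proof.
move=> tn ua; have [_ /(_ t.+1 i tn) [[_ _ Finh_span] _ _]] := adm.
have Fhadj u' v' : Defs.frel (F t i) u' v' -> hadj d (P t) i u' v'.
  by move/(subsetP (F_sub_Hedges (ltnW tn))); exact: pair_hadj.
apply: connect_homo_in ua => [u' v' _ /Fhadj /and4P[] // | u' v' u'a u'v'].
have [->|puv] := eqVneq (parent (P t.+1) u') (parent (P t.+1) v'); first exact: connect0.
have h := hadj_parent (clus_partition t i) (partition_trivIset (clus_partition t.+1 i))
  (@clus_refines t i) (Fhadj _ _ u'v') puv.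
have [pu'a pv'a _ _] := and4P h.
have v'a : v' \in active t by case/and4P: (Fhadj _ _ u'v').
have u'v'F : [set u'; v'] \in F t i := u'v'.
apply: Finh_span; rewrite inE; apply/andP; split.
  by apply/imset2P; exists (parent (P t.+1) u') (parent (P t.+1) v'); rewrite // inE pv'a h.
apply/existsP; exists (parent (P t.+1) u'); apply/existsP; exists (parent (P t.+1) v').
apply/existsP; exists u'; apply/existsP; exists v'.
by rewrite eqxx u'v'F (parent_active u'a).2 (parent_active v'a).2.
Qed.

Lemma card_new_edges_le t : (t < n)%N ->
  (#|F t.+1 i :\: Finh t.+1 i| + ncompF t.+1 <= ncompF t + #|fresh t.+1|)%N.
Proof.
move=> tn; have [_ /(_ t.+1 i tn) [_ [sF acF _] FinhF]] := adm.
apply: leq_trans (card_forest_diff acF FinhF _) _.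
  move=> e /(subsetP sF) /imset2P[A B Aa]; rewrite inE => /andP[Ba AB] ->.
  by exists A, B; case/and4P: AB.
have old_sub : parent (P t.+1) @: active t \subset active t.+1.
  by apply/subsetP => _ /imsetP[C Ca ->]; exact: (parent_active Ca).1.
rewrite -(setID (active t.+1) (parent (P t.+1) @: active t)) (setIidPr old_sub).
apply: leq_trans (leq_ncompU _ _ _) _; rewrite leq_add2r.
by apply: leq_ncomp_imset => u v ua _; exact: inherited_connect.
Qed.

Lemma old_terminal_parent t y : y \in Vt n t -> (i <= lev d y)%N ->
  exists2 C, C \in active t & y \in parent (P t.+1) C.
Proof.
move=> yV yi; have [C CP yC] := clus_cover i yV.
have Ca : C \in active t by rewrite in_act CP (leq_trans yi) ?lev_le_levC.
by exists C => //; apply: (subsetP (parent_active Ca).2).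
Qed.

Lemma fresh_no_old t D y : D \in fresh t.+1 -> y \in D ->
  y \in Vt n t -> (i <= lev d y)%N -> False.
Proof.
rewrite inE => /andP[Dnew Da] yD yV yi; have [C Ca yC] := old_terminal_parent yV yi.
have [pCa _] := parent_active Ca; move: Da pCa; rewrite !in_act => /andP[DP _] /andP[pCP _].
by move: Dnew; rewrite (clus_block_eq DP pCP yD yC) imset_f.
Qed.

Lemma fresh_pioneer t D x : D \in fresh t.+1 -> x \in D -> (i <= lev d x)%N ->
  x \in pioneers i /\ x.1 = t :> nat.
Proof.
move=> Df xD xi; have DP : D \in P t.+1 by move: Df; rewrite !inE => /and3P[].
have xV : x \in Vt n t.+1 by apply: (subsetP (clus_sub DP)).
have x1 : x.1 = t :> nat.
  move: (xV); rewrite inE ltnS leq_eqVlt => /orP[/eqP //|xt].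
  by case: (fresh_no_old Df xD _ xi); rewrite inE.
split=> //; rewrite inE xi /=; apply/forallP => y; apply/implyP => /andP[yx yi].
rewrite leNgt; apply/negP => xy.
have yV : y \in Vt n t by rewrite inE -x1.
have yV' : y \in Vt n t.+1 by move: yV; rewrite !inE => /ltnW.
have [W WP /andP[xW yW]] := close_terminals_same_cluster xV yV' xi yi xy.
by apply: (fresh_no_old Df _ yV yi); rewrite (clus_block_eq DP WP xD xW).
Qed.

Lemma card_fresh_le t : (#|fresh t.+1| <= #|[set x in pioneers i | x.1 == t :> nat]|)%N.
Proof.
have fresh_sub : fresh t.+1 \subset P t.+1.
  by apply/subsetP => D; rewrite !inE => /and3P[].
apply: card_blocks_le (trivIsetS fresh_sub (partition_trivIset (clus_partition _ _))) _.
move=> D Df; have DP := subsetP fresh_sub D Df.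
have [x xD xi] : exists2 x, x \in D & (i <= lev d x)%N.
  by apply: levC_witness (clus_neq0 DP) _; move: Df; rewrite !inE => /and3P[].
by have [xQ x1] := fresh_pioneer Df xD xi; exists x; rewrite // inE xQ x1 eqxx.
Qed.

Lemma sum_new_edges_le m : (m <= n)%N ->
  (\sum_(1 <= t < m.+1) #|F t i :\: Finh t i| + ncompF m
    <= #|[set x in pioneers i | (x.1 < m)%N]|)%N.
Proof.
elim: m => [_|m IH mn].
  have act0 : act d set0 i = set0 by apply/setP => C; rewrite !inE.
  by rewrite big_geq // /ncompF /active /P clus0 act0 /ncomp imset0 cards0.
rewrite big_nat_recr //= card_arrivals_recr -addnA.
apply: leq_trans (leq_add (leqnn _) (card_new_edges_le mn)) _.
by rewrite addnA; apply: leq_add; [exact: IH (ltnW mn) | exact: card_fresh_le].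
Qed.

End VirtualForests.

Lemma pioneers_mate_dist i : {in pioneers i, forall q, 2 ^+ i <= 2 * d q (mate q)}.
Proof. by move=> q; rewrite inE => /andP[/lev_mate_dist]. Qed.

Lemma pioneers_sep i : {in pioneers i &, forall q q', q != q' -> 2 ^+ i <= 2 * d q q'}.
Proof.
have earlier a b : a \in pioneers i -> b \in pioneers i -> (b.1 < a.1)%N -> 2 ^+ i <= 2 * d a b.
  rewrite !inE => /andP[_ /forallP/(_ b) ab] /andP[bi _] ba.
  by move: ab; rewrite ba bi /=; have := d_ge0 a b; lra.
move=> q q' qQ q'Q qq'; case: (ltngtP q.1 q'.1) => [qq'1|q'q1|eq1].
- by rewrite d_sym; exact: earlier.
- exact: earlier.
have -> : q' = mate q.
  case: q q' qq' eq1 {qQ q'Q} => [j b] [j' b'] /= + /val_inj ejj'; rewrite /mate -ejj' /=.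
  by case: b b' => -[]; rewrite ?eqxx.
exact: pioneers_mate_dist.
Qed.

End Metric.

Theorem theorem4p7 (R : realType) :
  exists c : R,
  forall (n : nat) (d : term n -> term n -> R),
  is_metric_ge1 d ->
  forall Finh F : nat -> nat -> {set {set {set term n}}},
  admissible d Finh F ->
  forall i : nat,
  \sum_(1 <= t < n.+1) (#|F t i :\: Finh t i|)%:R * 2 ^+ i.+1
    <= c * OPT d.
Proof.
exists 16 => n d dm Finh F adm i.
have new_le_pioneers : (\sum_(1 <= t < n.+1) #|F t i :\: Finh t i| <= #|pioneers d i|)%N.
  apply: leq_trans (leq_trans (leq_addr _ _) (sum_new_edges_le dm i adm (leqnn n))) _.
  by apply/subset_leq_card/subsetP => x; rewrite inE => /andP[].
rewrite -mulr_suml -natr_sum.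
apply: le_trans (separated_OPT dm (pioneers_mate_dist dm (i:=i)) (pioneers_sep dm (i:=i))).
by rewrite ler_wpM2r ?exprn_ge0 ?ler_nat.
Qed.
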